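(* Let $X$ be a Banach space with a normalized $1$-unconditional basis $(e_i)_i$ not equivalent to the standard basis of $c_0$, and let $q\le p$ in $[1,\infty]$, $q<\infty$, be such that $X$ satisfies lower $p$ and upper $q$ estimates on block sequences with constant one. Let $\varepsilon>0$ and $d\in\mathbb{N}$. Let $P\subseteq\mathbb{N}$ satisfy $\psi_P(k)\ge\frac12(\psi(k)-1)$ for all $k\in\mathbb{N}$, and let $M=\{k_j\}_{j=1}^\infty\subseteq\mathbb{N}$ (with $k_1<k_2<\cdots$) satisfy \[\psi(k_{j+1})\geq\Big(\frac{8d^{1/q-1/p}}{\varepsilon}+2\Big)\psi(k_j)+1\quad\text{for all } j.\] Then for all $\bar m=(m_1,\dots,m_d),\bar n=(n_1,\dots,n_d)\in[M]^d$ with $m_1<n_1<m_2<n_2<\dots<m_d<n_d$, all $(\lambda_s)_{s=1}^d\subseteq\mathbb{R}$, and each $Q\in\{P,P^c\}$: \[\Big\|\sum_{s=1}^d\lambda_s1_{(n_{s-1},n_s]\cap Q}\Big\|_X\le1\implies\Big\|\sum_{s=1}^d\lambda_s1_{(n_{s-1},m_s]}\Big\|_X\le\frac\varepsilon4,\] \[\Big\|\sum_{s=1}^d\lambda_s1_{(m_{s-1},m_s]\cap Q}\Big\|_X\le1\implies\Big\|\sum_{s=1}^d\lambda_s1_{(m_{s-1},n_{s-1}]}\Big\|_X\le\frac\varepsilon4,\] where $m_0=n_0=0$.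
   Context: Identify finitely supported real sequences with elements of $X$ via $(e_i)$; for finite $A\subseteq\mathbb{N}$, $1_A=\sum_{i\in A}e_i$, and $1_{(a,b]}$ means $1_{\{i\in\mathbb{N}:a<i\le b\}}$. $\psi(k)=\|1_{[1,k]}\|_X$; $\psi_P(k)=\min\{\|1_{[1,k]\cap P}\|_X,\|1_{[1,k]\cap P^c}\|_X\}$, $P^c=\mathbb{N}\setminus P$. $[M]^d$ is the set of $d$-tuples $(n_1,\dots,n_d)\in M^d$ with $n_1<\dots<n_d$. A block sequence $(x_i)_{i=1}^n$ is one with $x_i\in\mathrm{span}\{e_j: s_i\le j<s_{i+1}\}$ for some $s_1<\dots<s_{n+1}$. Lower $p$ and upper $q$ estimates with constant one: $(\sum_i\|x_i\|_X^p)^{1/p}\le\|\sum_ix_i\|_X\le(\sum_i\|x_i\|_X^q)^{1/q}$ for every block sequence (with the usual modification for $p=\infty$). Normalized: $\|e_i\|_X=1$; $1$-unconditional: $\|\sum a_ie_i\|\le\|\sum b_ie_i\|$ whenever $|a_i|\le|b_i|$. *)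

(* X is modelled by its norm on finitely supported
   real sequences indexed by nat; coordinate i >= 1 corresponds to e_i, and
   coordinate 0 is never used (all vectors considered vanish at 0). *)
From HB Require Import structures.
From mathcomp Require Import all_boot all_order all_algebra.
From mathcomp Require Import all_classical all_reals all_analysis.
Set Implicit Arguments. Unset Strict Implicit. Unset Printing Implicit Defensive.
Import Order.TTheory GRing.Theory Num.Theory.
Local Open Scope ring_scope.

Section Defs.
Context {R : realType}.

Definition supp_in (x : nat -> R) (K : nat) : Prop :=
  forall i, ((i == 0) || (K < i))%N -> x i = 0.
Definition finsupp (x : nat -> R) : Prop := exists K, supp_in x K.

Definition vadd (x y : nat -> R) : nat -> R := fun i => x i + y i.
Definition vscale (a : R) (x : nat -> R) : nat -> R := fun i => a * x i.
Definition vsum (x : nat -> nat -> R) (n : nat) : nat -> R :=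
  fun j => \sum_(i < n) x i j.

Definition is_norm (N : (nat -> R) -> R) : Prop :=
  (forall x, finsupp x -> 0 <= N x) /\
  (forall x, finsupp x -> N x = 0 -> x = (fun _ => 0)) /\
  (forall a x, finsupp x -> N (vscale a x) = `|a| * N x) /\
  (forall x y, finsupp x -> finsupp y -> N (vadd x y) <= N x + N y).

Definition ebasis (i : nat) : nat -> R := fun j => if j == i then 1 else 0.

Definition normalized (N : (nat -> R) -> R) : Prop :=
  forall i, (0 < i)%N -> N (ebasis i) = 1.

Definition unconditional1 (N : (nat -> R) -> R) : Prop :=
  forall a b, finsupp a -> finsupp b ->
    (forall i, `|a i| <= `|b i|) -> N a <= N b.

Definition supnorm (x : nat -> R) (K : nat) : R := \big[Num.max/0]_(i < K.+1) `|x i|.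

Definition equiv_c0 (N : (nat -> R) -> R) : Prop :=
  exists C : R, 0 < C /\ forall x K, supp_in x K ->
    C^-1 * supnorm x K <= N x /\ N x <= C * supnorm x K.

Definition ind (A : pred nat) : nat -> R := fun i => if A i then 1 else 0.
Definition itv_oc (a b : nat) : pred nat := fun i => (a < i <= b)%N.
Definition inter (A B : pred nat) : pred nat := fun i => A i && B i.
Definition compl (A : pred nat) : pred nat := fun i => ~~ A i.

Definition psi (N : (nat -> R) -> R) (k : nat) : R := N (ind (itv_oc 0 k)).
Definition psiP (N : (nat -> R) -> R) (P : pred nat) (k : nat) : R :=
  Num.min (N (ind (inter (itv_oc 0 k) P))) (N (ind (inter (itv_oc 0 k) (compl P)))).

Definition is_block (x : nat -> nat -> R) (n : nat) : Prop :=
  exists s : nat -> nat, (0 < s 0)%N /\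
    (forall i, (i < n)%N -> (s i < s i.+1)%N) /\
    (forall i, (i < n)%N -> forall j, ~~ (s i <= j < s i.+1)%N -> x i j = 0).

Definition lower_est (N : (nat -> R) -> R) (p : \bar R) : Prop :=
  forall x n, is_block x n ->
    match p with
    | r%:E => powR (\sum_(i < n) powR (N (x i)) r) r^-1 <= N (vsum x n)
    | +oo%E => \big[Num.max/0]_(i < n) N (x i) <= N (vsum x n)
    | -oo%E => false
    end.

Definition upper_est (N : (nat -> R) -> R) (q : R) : Prop :=
  forall x n, is_block x n ->
    N (vsum x n) <= powR (\sum_(i < n) powR (N (x i)) q) q^-1.

Definition einv (p : \bar R) : R :=
  match p with r%:E => r^-1 | _ => 0 end.

End Defs.

From HB Require Import structures.
From mathcomp Require Import all_boot all_order all_algebra.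
From mathcomp Require Import all_classical all_reals all_analysis.
From mathcomp Require Import ring lra zify.
Set Implicit Arguments. Unset Strict Implicit. Unset Printing Implicit Defensive.
Import Order.TTheory GRing.Theory Num.Theory.
Local Open Scope ring_scope.

(* Write C = 8 d^(1/q - 1/p) / eps + 2.  For each s the piece 1_(n_{s-1}, m_s] has norm at
   most psi(m_s), whereas psi(n_s) >= C psi(m_s) + 1 together with psi_P >= (psi - 1) / 2
   forces 1_((n_{s-1}, n_s] ∩ Q) to have norm at least (C/2 - 1) psi(m_s).  Hence the block
   sequences x_s = lam_s 1_((n_{s-1}, n_s] ∩ Q) and y_s = lam_s 1_(n_{s-1}, m_s] satisfy
   ||y_s|| <= ||x_s|| / (C/2 - 1).  If ||sum x_s|| <= 1, the lower p estimate and the power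
   mean inequality give sum ||x_s||^q <= d^(1 - q/p), and the upper q estimate then yields
   ||sum y_s|| <= d^(1/q - 1/p) / (C/2 - 1) = eps / 4.  The second implication is the same
   argument with the roles of (m_s) and (n_s) exchanged. *)

Section PowerSums.
Variable R : realType.

(* Young's inequality [conjugate_powR] with the exponents 1/r and 1/(1-r). *)
Lemma powR_le_affine (x r : R) : 0 <= x -> 0 < r <= 1 ->
  powR x r <= r * x + (1 - r).
Proof.
move=> x0 /andP[r0 r1]; have [->|r_neq1] := eqVneq r 1.
  by rewrite powRr1 // mul1r subrr addr0.
have r_lt1 : r < 1 by rewrite lt_neqAle r_neq1.
have := @conjugate_powR R (powR x r) 1 r^-1 (1 - r)^-1 (powR_ge0 _ _) ler01.
rewrite !invr_gt0 r0 subr_gt0 r_lt1 !invrK addrC subrK => /(_ isT isT erefl).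
by rewrite -powRrM mulfV ?gt_eqF // powRr1 // powR1 mulr1 mul1r mulrC.
Qed.

Lemma sum_powR_le_card (d : nat) (a : nat -> R) (r : R) :
  (0 < d)%N -> 0 < r <= 1 -> (forall i, (i < d)%N -> 0 <= a i) ->
  \sum_(i < d) a i <= 1 -> \sum_(i < d) powR (a i) r <= powR d%:R (1 - r).
Proof.
move=> d_gt0 r01 a0 suma_le1; have /andP[r0 r1] := r01.
have d0 : (0 : R) < d%:R by rewrite ltr0n.
(* Apply [powR_le_affine] to [d * a i] and sum over [i]. *)
have scaled : powR d%:R r * \sum_(i < d) powR (a i) r <= d%:R.
  rewrite mulr_sumr.
  apply: (@le_trans _ _ (\sum_(i < d) (r * (d%:R * a i) + (1 - r)))).
    apply: ler_sum => i _; have ai0 := a0 _ (ltn_ord i).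
    rewrite -powRM ?(ltW d0) //.
    by apply: powR_le_affine => //; rewrite mulr_ge0 ?(ltW d0).
  rewrite big_split /= -!mulr_sumr sumr_const card_ord -mulr_natr.
  have : r * (d%:R * \sum_(i < d) a i) <= r * d%:R.
    by rewrite ler_pM2l // -[leRHS]mulr1 ler_pM2l.
  nra.
rewrite -(ler_pM2l (powR_gt0 r d0)) (le_trans scaled) //.
rewrite -powRD; last by rewrite (gt_eqF d0) implybT.
by rewrite addrC subrK powRr1 // ltW.
Qed.

Lemma sum_powR_le_of_lp (d : nat) (a : nat -> R) (q r : R) :
  (0 < d)%N -> 0 < q <= r -> (forall i, (i < d)%N -> 0 <= a i) ->
  powR (\sum_(i < d) powR (a i) r) r^-1 <= 1 ->
  \sum_(i < d) powR (a i) q <= powR d%:R (1 - q * r^-1).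
Proof.
move=> d_gt0 /andP[q0 qr] a0 lp_le1; have r0 := lt_le_trans q0 qr.
have r_neq0 : r != 0 by rewrite gt_eqF.
have sum_le1 : \sum_(i < d) powR (a i) r <= 1.
  have := @ge0_ler_powR R r (ltW r0) _ _ (powR_ge0 _ _) ler01 lp_le1.
  by rewrite powR1 -powRrM mulVf // powRr1 // sumr_ge0 // => i _; exact: powR_ge0.
have -> : \sum_(i < d) powR (a i) q = \sum_(i < d) powR (powR (a i) r) (q / r).
  by apply: eq_bigr => i _; rewrite -powRrM mulrCA mulfV // mulr1.
apply: (@sum_powR_le_card d (fun i => powR (a i) r)) => //.
  by rewrite divr_gt0 //= ler_pdivrMr // mul1r.
by move=> i _; exact: powR_ge0.
Qed.

Lemma sum_powR_le_of_max (d : nat) (a : nat -> R) (q : R) : 0 <= q ->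
  (forall i, (i < d)%N -> 0 <= a i) -> \big[Num.max/0]_(i < d) a i <= 1 ->
  \sum_(i < d) powR (a i) q <= d%:R.
Proof.
move=> q0 a0 max_le1.
apply: (@le_trans _ _ (\sum_(i < d) (1 : R))); last by rewrite sumr_const card_ord.
apply: ler_sum => i _; have ai_le1 := le_trans (le_bigmax _ _ i) max_le1.
by have := @ge0_ler_powR R q q0 _ _ (a0 _ (ltn_ord i)) ler01 ai_le1; rewrite powR1.
Qed.

Lemma lq_sum_dominated (d : nat) (a b : nat -> R) (c q : R) : 0 < q -> 0 <= c ->
  (forall i, (i < d)%N -> 0 <= a i) -> (forall i, (i < d)%N -> 0 <= b i <= c * a i) ->
  powR (\sum_(i < d) powR (b i) q) q^-1 <= c * powR (\sum_(i < d) powR (a i) q) q^-1.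
Proof.
move=> q0 c0 a0 hb.
have sum_le : \sum_(i < d) powR (b i) q <= powR c q * \sum_(i < d) powR (a i) q.
  rewrite mulr_sumr; apply: ler_sum => i _.
  have /andP[bi0 bi_le] := hb i (ltn_ord i); have ai0 := a0 i (ltn_ord i).
  rewrite -powRM //; apply: ge0_ler_powR => //; first exact: ltW.
  by rewrite nnegrE mulr_ge0.
have sum_ge0 (f : nat -> R) : 0 <= \sum_(i < d) powR (f i) q.
  by apply: sumr_ge0 => i _; exact: powR_ge0.
apply: (le_trans (@ge0_ler_powR R q^-1 _ _ _ (sum_ge0 b) _ sum_le)).
- by rewrite invr_ge0 ltW.
- by rewrite nnegrE mulr_ge0 ?powR_ge0.
by rewrite powRM ?powR_ge0 // -powRrM mulfV ?gt_eqF // powRr1.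
Qed.

End PowerSums.

Section NormOfIndicators.
Variables (R : realType) (N : (nat -> R) -> R).
Hypotheses (hN : is_norm N) (hU : unconditional1 N).
Local Notation ind := (@ind R).

Lemma supp_in_ind (A : pred nat) K :
  (forall i, A i -> (0 < i <= K)%N) -> supp_in (ind A) K.
Proof. by move=> hA i; rewrite /ind; case: ifP => // /hA; lia. Qed.

Lemma norm_ge0 x : finsupp x -> 0 <= N x.
Proof. by case: hN => h _; exact: h. Qed.

Lemma normZ_ind (lam : R) (A : pred nat) K : supp_in (ind A) K ->
  N (fun j => lam * ind A j) = `|lam| * N (ind A).
Proof. by move=> hA; case: hN => _ [_ [hZ _]]; apply: hZ; exists K. Qed.

Lemma le_norm_ind (A B : pred nat) K : supp_in (ind B) K ->
  (forall i, A i -> B i) -> N (ind A) <= N (ind B).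
Proof.
move=> hB hAB; have hA : supp_in (ind A) K.
  move=> i /hB; rewrite /ind.
  by case: (boolP (A i)) => [/hAB -> /eqP|//]; rewrite oner_eq0.
apply: hU; [by exists K | by exists K | move=> i].
rewrite /ind; case: ifP => [/hAB -> // | _].
by rewrite normr0; case: ifP; rewrite ?normr1 ?normr0.
Qed.

Lemma norm_ind_le_psi (A : pred nat) b :
  (forall i, A i -> (0 < i <= b)%N) -> N (ind A) <= psi N b.
Proof.
move=> hA; apply: (@le_norm_ind _ _ b); first by apply: supp_in_ind.
by move=> i /hA.
Qed.

Lemma le_psi a b : (a <= b)%N -> psi N a <= psi N b.
Proof. by move=> ab; apply: norm_ind_le_psi => i /andP[-> /leq_trans->]. Qed.

Lemma norm_ind_itv_split (a b : nat) (Q : pred nat) : (a <= b)%N ->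
  N (ind (inter (itv_oc 0 b) Q)) <=
  N (ind (inter (itv_oc 0 a) Q)) + N (ind (inter (itv_oc a b) Q)).
Proof.
move=> ab.
have -> : ind (inter (itv_oc 0 b) Q) =
    vadd (ind (inter (itv_oc 0 a) Q)) (ind (inter (itv_oc a b) Q)).
  apply: funext => i; rewrite /vadd /ind /inter /itv_oc.
  case: (Q i); rewrite ?andbT ?andbF ?addr0 //.
  have [ia|ai] := leqP i a; first by rewrite (leq_trans ia ab) /= addr0.
  by rewrite andbF /= add0r (leq_ltn_trans (leq0n a) ai).
case: hN => _ [_ [_ htri]]; apply: htri.
  by exists a; apply: supp_in_ind => i /andP[].
by exists b; apply: supp_in_ind => i /andP[]; rewrite /itv_oc; lia.
Qed.

(* The [psi_P] hypothesis says that [Q] carries half of [(0, b]]; a large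
   jump of [psi] from [t] to [b] then forces the part on [(a, b]] to be large. *)
Lemma norm_ind_gap_ge (P Q : pred nat) (C : R) (a b t : nat) :
  (forall K, (0 < K)%N -> psiP N P K >= (psi N K - 1) / 2) ->
  Q = P \/ Q = compl P -> (a <= b)%N -> (0 < b)%N ->
  C * psi N t + 1 <= psi N b -> psi N a <= psi N t ->
  (C / 2 - 1) * psi N t <= N (ind (inter (itv_oc a b) Q)).
Proof.
move=> hP hQ ab b0 jump at_le.
have half : (psi N b - 1) / 2 <= N (ind (inter (itv_oc 0 b) Q)).
  by apply: (le_trans (hP b b0)); case: hQ => ->; rewrite ge_min lexx ?orbT.
have split := norm_ind_itv_split Q ab.
have head : N (ind (inter (itv_oc 0 a) Q)) <= psi N a.
  by apply: norm_ind_le_psi => i /andP[].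
lra.
Qed.

Lemma psi0 : psi N 0 = 0.
Proof.
have zero : ind (itv_oc 0 0) = vscale 0 (ind (itv_oc 0 0)).
  by apply: funext => i; rewrite /vscale mul0r /ind /itv_oc; case: i.
have fs : finsupp (ind (itv_oc 0 0)) by exists 0%N; apply: supp_in_ind.
by case: hN => _ [_ [hZ _]]; rewrite /psi zero hZ // normr0 mul0r.
Qed.

Lemma psi_ge1 b : normalized N -> (0 < b)%N -> 1 <= psi N b.
Proof.
move=> hn b_gt0; rewrite -(hn 1%N) //.
by apply: norm_ind_le_psi => i; rewrite /ebasis; case: eqP => // ->.
Qed.

End NormOfIndicators.

Lemma psi_growth (R : realType) (N : (nat -> R) -> R) (k : nat -> nat) (C : R) x y :
  is_norm N -> unconditional1 N -> normalized N ->
  (0 < k 0)%N -> (forall j, (k j < k j.+1)%N) ->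
  (forall j, C * psi N (k j) + 1 <= psi N (k j.+1)) ->
  (x = 0%N \/ exists j, x = k j) -> (exists j, y = k j) -> (x < y)%N ->
  C * psi N x + 1 <= psi N y.
Proof.
move=> hN hU hn k0 k_incr jump hx [j ->].
have k_mono := leq_mono (homo_ltn ltn_trans k_incr).
case: hx => [-> _|[i ->] xy].
  by rewrite psi0 // mulr0 add0r psi_ge1 // (leq_trans k0) // k_mono.
apply: le_trans (jump i) (le_psi hU _); rewrite k_mono.
by move: xy; rewrite ltnNge k_mono -ltnNge.
Qed.

Section BlockEstimates.
Variables (R : realType) (N : (nat -> R) -> R) (p : \bar R) (q : R).
Hypotheses (hN : is_norm N) (hU : unconditional1 N).
Hypotheses (hlow : lower_est N p) (hup : upper_est N q).
Hypotheses (q_ge1 : 1 <= q) (q_le_p : (q%:E <= p)%E).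
Local Notation ind := (@ind R).

Lemma lower_est_sum_powR (x : nat -> nat -> R) d : (0 < d)%N -> is_block x d ->
  (forall i, (i < d)%N -> 0 <= N (x i)) -> N (vsum x d) <= 1 ->
  \sum_(i < d) powR (N (x i)) q <= powR d%:R (1 - q * einv p).
Proof.
move=> d_gt0 bx x0 sum_le1; have := hlow bx.
move: q_le_p; case: p => [r| |] //= q_le_r low.
  apply: (@sum_powR_le_of_lp R d (fun i => N (x i))) => //.
    by rewrite -lee_fin q_le_r andbT (lt_le_trans ltr01 q_ge1).
  exact: le_trans low sum_le1.
rewrite mulr0 subr0 powRr1 ?ler0n //.
apply: (@sum_powR_le_of_max R d (fun i => N (x i))) => //; first exact: le_trans q_ge1.
exact: le_trans low sum_le1.
Qed.

Lemma block_domination (x y : nat -> nat -> R) (c : R) d :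
  (0 < d)%N -> 0 <= c -> is_block x d -> is_block y d ->
  (forall i, (i < d)%N -> 0 <= N (x i)) ->
  (forall i, (i < d)%N -> 0 <= N (y i) <= c * N (x i)) ->
  N (vsum x d) <= 1 -> N (vsum y d) <= c * powR d%:R (q^-1 - einv p).
Proof.
move=> d_gt0 c0 bx by_ x0 yx sum_le1; have q0 := lt_le_trans ltr01 q_ge1.
apply: (le_trans (hup by_)); apply: (le_trans (lq_sum_dominated q0 c0 x0 yx)).
rewrite ler_wpM2l //.
have sumx_le := lower_est_sum_powR d_gt0 bx x0 sum_le1.
have := @ge0_ler_powR R q^-1 _ _ _ _ _ sumx_le.
rewrite -powRrM mulrBl mul1r mulrAC mulfV ?gt_eqF // mul1r; apply.
- by rewrite invr_ge0 ltW.
- by rewrite nnegrE; apply: sumr_ge0 => i _; exact: powR_ge0.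
- by rewrite nnegrE powR_ge0.
Qed.

Lemma is_block_ind (u : nat -> nat) (lam : nat -> R) (S : nat -> pred nat) d :
  (forall i, (i < d)%N -> (u i < u i.+1)%N) ->
  (forall i, (i < d)%N -> forall j, S i j -> (u i < j <= u i.+1)%N) ->
  is_block (fun i j => lam i * ind (S i) j) d.
Proof.
move=> hu hS; exists (fun i => (u i).+1); split=> //; split=> [i /hu//|i hi j].
rewrite ltnS /ind; case: (boolP (S i j)) => [/(hS i hi) -> //|_ _].
by rewrite mulr0.
Qed.

Lemma ind_block_domination (u : nat -> nat) (lam : nat -> R) (A B : nat -> pred nat)
    (c : R) d :
  (0 < d)%N -> 0 <= c -> (forall i, (i < d)%N -> (u i < u i.+1)%N) ->
  (forall i, (i < d)%N -> forall j, A i j -> (u i < j <= u i.+1)%N) ->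
  (forall i, (i < d)%N -> forall j, B i j -> (u i < j <= u i.+1)%N) ->
  (forall i, (i < d)%N -> N (ind (B i)) <= c * N (ind (A i))) ->
  N (vsum (fun i j => lam i * ind (A i) j) d) <= 1 ->
  N (vsum (fun i j => lam i * ind (B i) j) d) <= c * powR d%:R (q^-1 - einv p).
Proof.
move=> d_gt0 c0 hu hA hB hBA.
have supp (S : nat -> pred nat) i : (forall j, S i j -> (u i < j <= u i.+1)%N) ->
    supp_in (ind (S i)) (u i.+1).
  by move=> hS; apply: supp_in_ind => j /hS; lia.
have normA_ge0 i : (i < d)%N -> 0 <= N (ind (A i)).
  by move=> hi; apply: norm_ge0 => //; exists (u i.+1); exact: supp (hA i hi).
apply: block_domination => //; [exact: is_block_ind hu hA | exact: is_block_ind hu hB | |].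
  by move=> i hi; rewrite (normZ_ind hN _ (supp A i (hA i hi))) mulr_ge0 ?normA_ge0.
move=> i hi; rewrite (normZ_ind hN _ (supp A i (hA i hi))).
rewrite (normZ_ind hN _ (supp B i (hB i hi))) mulrCA ler_wpM2l ?hBA // andbT.
by rewrite mulr_ge0 ?norm_ge0 //; exists (u i.+1); exact: supp (hB i hi).
Qed.

Lemma interlaced_estimate (P Q : pred nat) (C : R) (u t : nat -> nat) (lam : nat -> R)
    d :
  (forall K, (0 < K)%N -> psiP N P K >= (psi N K - 1) / 2) ->
  Q = P \/ Q = compl P -> (0 < d)%N -> 2 < C ->
  (forall s, (1 <= s <= d)%N -> (u s.-1 <= t s < u s)%N) ->
  (forall s, (1 <= s <= d)%N -> C * psi N (t s) + 1 <= psi N (u s)) ->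
  N (fun i => \sum_(1 <= s < d.+1) lam s * ind (inter (itv_oc (u s.-1) (u s)) Q) i) <= 1 ->
  N (fun i => \sum_(1 <= s < d.+1) lam s * ind (itv_oc (u s.-1) (t s)) i)
    <= (C / 2 - 1)^-1 * powR d%:R (q^-1 - einv p).
Proof.
move=> hP hQ d_gt0 C_gt2 ut jump.
have shift (F : nat -> nat -> R) :
    (fun i => \sum_(1 <= s < d.+1) F s i) = vsum (fun s => F s.+1) d.
  by apply: funext => i; rewrite /vsum big_add1 big_mkord.
rewrite (shift (fun s i => lam s * ind (inter (itv_oc (u s.-1) (u s)) Q) i)).
rewrite (shift (fun s i => lam s * ind (itv_oc (u s.-1) (t s)) i)) /=.
have ut' i : (i < d)%N -> (u i <= t i.+1 < u i.+1)%N by move=> hi; exact: ut.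
have c_gt0 : 0 < C / 2 - 1 by rewrite subr_gt0 ltr_pdivlMr // mul1r.
apply: (ind_block_domination (u := u) (A := fun i => inter (itv_oc (u i) (u i.+1)) Q)
  (B := fun i => itv_oc (u i) (t i.+1))) => //.
- by rewrite invr_ge0 ltW.
- by move=> i /ut' /andP[ut_i tu_i]; exact: leq_ltn_trans ut_i tu_i.
- by move=> i _ j /andP[].
- by move=> i /ut' /andP[_ tu_i] j /andP[-> jt]; exact: leq_trans jt (ltnW tu_i).
move=> i hi; have /andP[ut_i tu_i] := ut' i hi.
have gap := norm_ind_gap_ge hN hU hP hQ (ltnW (leq_ltn_trans ut_i tu_i))
  (leq_ltn_trans (leq0n _) tu_i) (jump i.+1 hi) (le_psi hU ut_i).
have small : N (ind (itv_oc (u i) (t i.+1))) <= psi N (t i.+1).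
  by apply: norm_ind_le_psi => // j /andP[/(leq_ltn_trans (leq0n _)) -> ->].
apply: (le_trans small); rewrite -{1}(mulKf (lt0r_neq0 c_gt0) (psi N (t i.+1))).
by rewrite ler_wpM2l // invr_ge0 ltW.
Qed.

End BlockEstimates.

Theorem lemma3p2 (R : realType) (N : (nat -> R) -> R) (p : \bar R) (q : R)
    (eps : R) (d : nat) (P : pred nat) (k : nat -> nat) :
  is_norm N -> normalized N -> unconditional1 N -> ~ equiv_c0 N ->
  1 <= q -> (q%:E <= p)%E -> lower_est N p -> upper_est N q ->
  0 < eps -> (0 < d)%N ->
  (forall K, (0 < K)%N -> psiP N P K >= (psi N K - 1) / 2) ->
  (0 < k 0%N)%N -> (forall j, (k j < k j.+1)%N) ->
  (forall j, psi N (k j.+1) >=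
     (8 * powR d%:R (q^-1 - einv p) / eps + 2) * psi N (k j) + 1) ->
  forall (m n : nat -> nat) (lam : nat -> R) (Q : pred nat),
  m 0%N = 0%N -> n 0%N = 0%N ->
  (forall s, (1 <= s <= d)%N -> (exists j, m s = k j) /\ (exists j, n s = k j)) ->
  (forall s, (1 <= s <= d)%N -> (m s < n s)%N) ->
  (forall s, (1 <= s < d)%N -> (n s < m s.+1)%N) ->
  (Q = P \/ Q = compl P) ->
  (N (fun i => \sum_(1 <= s < d.+1) lam s * ind (inter (itv_oc (n s.-1) (n s)) Q) i) <= 1 ->
   N (fun i => \sum_(1 <= s < d.+1) lam s * ind (itv_oc (n s.-1) (m s)) i) <= eps / 4)
  /\
  (N (fun i => \sum_(1 <= s < d.+1) lam s * ind (inter (itv_oc (m s.-1) (m s)) Q) i) <= 1 ->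
   N (fun i => \sum_(1 <= s < d.+1) lam s * ind (itv_oc (m s.-1) (n s.-1)) i) <= eps / 4).
Proof.
move=> hN hn hU _ q_ge1 q_le_p hlow hup eps_gt0 d_gt0 hP k0 k_incr hk m n lam Q m0 n0
  hM hmn hnm hQ.
set D := powR d%:R (q^-1 - einv p); set C := 8 * D / eps + 2.
have D_gt0 : 0 < D by rewrite powR_gt0 // ltr0n.
have C_gt2 : 2 < C by rewrite ltrDr divr_gt0 // mulr_gt0.
have -> : eps / 4 = (C / 2 - 1)^-1 * D.
  have -> : C / 2 - 1 = 4 * D / eps by rewrite /C; field; rewrite gt_eqF.
  by rewrite invf_div; field; rewrite gt_eqF.
have grow := psi_growth hN hU hn k0 k_incr hk.
have k_gt0 j : (0 < k j)%N.
  by apply: leq_trans k0 _; rewrite (leq_mono (homo_ltn ltn_trans k_incr)).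
have prev s : (1 <= s <= d)%N ->
    (m s.-1 <= n s.-1 < m s)%N /\ (n s.-1 = 0%N \/ exists j, n s.-1 = k j).
  case: s => [//|[|s]] hs.
    by have [[j ->] _] := hM 1%N hs; rewrite m0 n0 k_gt0; auto.
  have hs' : (1 <= s.+1 <= d)%N by case/andP: hs => _ /ltnW.
  split; last by right; exact: (hM _ hs').2.
  by rewrite /= ltnW ?hmn // hnm.
split.
  apply: (interlaced_estimate hN hU hlow hup q_ge1 q_le_p (u := n) (t := m) hP) => // s hs.
    by have [/andP[_ n_m] _] := prev s hs; rewrite ltnW ?hmn.
  have [[i mi] [j nj]] := hM s hs.
  by apply: grow; [right; exists i | exists j | exact: hmn].
apply: (interlaced_estimate hN hU hlow hup q_ge1 q_le_p (u := m) (t := fun s => n s.-1) hP)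
  => // s hs.
  exact: (prev s hs).1.
have [/andP[_ n_m] n_in] := prev s hs; have [[i mi] _] := hM s hs.
by apply: grow => //; exists i.
Qed.
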